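(* Let $R$ be a unital amenable affine algebra over a field $K$, with a fixed Følner exhaustion $\{W_n\}$ and ultralimit $\lim_\omega$. If $M$ is a submodule of a finitely generated left $R$-module $N$ with $M$ finitely generated, then $$\mathrm{rank}(N)\ge\mathrm{rank}(N/M)+\mathrm{rank}(M).$$
   Context: An affine algebra is a finitely generated associative algebra over $K$. A Følner exhaustion is a sequence of finite-dimensional $K$-subspaces $W_1\subseteq W_2\subseteq\cdots$ with $\bigcup_nW_n=R$ such that for every $r\in R$, $\lim_{n\to\infty}\dim_K(W_nr+W_n)/\dim_K(W_n)=1$; $R$ is amenable if one exists. $\lim_\omega$ is the ultralimit along an ultrafilter $\omega$ on $\mathbb N$ (a linear functional on bounded sequences with $\liminf\le\lim_\omega\le\limsup$, equal to the limit on convergent sequences). For a finitely generated module $P=\sum_{i=1}^sRy_i$, $\mathrm{rank}(P)=\lim_\omega\dim_K(\sum_iW_ny_i)/\dim_K(W_n)$ (independent of the generators). *)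

From HB Require Import structures.
From mathcomp Require Import all_boot all_order all_algebra.
From mathcomp Require Import boolp reals.
Set Implicit Arguments. Unset Strict Implicit. Unset Printing Implicit Defensive.
Import Order.TTheory GRing.Theory Num.Theory.
Local Open Scope ring_scope.

Section KLin.
Variables (K : fieldType) (V : zmodType) (sc : K -> V -> V).

Definition in_Kspan (s : seq V) (x : V) : Prop :=
  exists c : seq K, size c = size s /\ x = \sum_(i < size s) sc c`_i s`_i.

Definition Kfree (s : seq V) : Prop :=
  forall c : seq K, size c = size s ->
    \sum_(i < size s) sc c`_i s`_i = 0 -> forall i, c`_i = 0.

(* dim_K of the K-span of s = maximal size of a K-independent subfamily *)
Definition dim_span (s : seq V) : nat :=
  \max_(m : (size s).-tuple bool | `[< Kfree (mask m s) >]) size (mask m s).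
End KLin.

Inductive gen_alg (K : fieldType) (R : algType K) (g : seq R) : R -> Prop :=
  | ga_gen x : x \in g -> gen_alg g x
  | ga_one : gen_alg g 1
  | ga_add x y : gen_alg g x -> gen_alg g y -> gen_alg g (x + y)
  | ga_mul x y : gen_alg g x -> gen_alg g y -> gen_alg g (x * y)
  | ga_scale (k : K) x : gen_alg g x -> gen_alg g (k *: x).

Definition affine (K : fieldType) (R : algType K) : Prop :=
  exists g : seq R, forall r : R, gen_alg g r.

(* ---------- Folner exhaustions; W n is the K-span of the seq W n ---------- *)
Definition ratio (Rl : realType) (a b : nat) : Rl := a%:R / b%:R.

Definition folner_exhaustion (K : fieldType) (R : algType K) (Rl : realType)
    (W : nat -> seq R) : Prop :=
  [/\ (forall n x, in_Kspan *:%R (W n) x -> in_Kspan *:%R (W n.+1) x),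
      (forall r : R, exists n, in_Kspan *:%R (W n) r) &
      (forall r : R, forall e : Rl, 0 < e -> exists n0, forall n, (n0 <= n)%N ->
         `| ratio Rl (dim_span *:%R ([seq w * r | w <- W n] ++ W n))
                      (dim_span *:%R (W n)) - 1 | < e)].

Definition amenable (K : fieldType) (R : algType K) (Rl : realType) : Prop :=
  exists W : nat -> seq R, folner_exhaustion Rl W.

Record ultrafilter_nat (U : (nat -> Prop) -> Prop) : Prop := {
  uf_full : U (fun _ => True);
  uf_proper : ~ U (fun _ => False);
  uf_up : forall A B : nat -> Prop, (forall n, A n -> B n) -> U A -> U B;
  uf_cap : forall A B : nat -> Prop, U A -> U B -> U (fun n => A n /\ B n);
  uf_ultra : forall A : nat -> Prop, U A \/ U (fun n => ~ A n);
  uf_free : forall m : nat, U (fun n => (m <= n)%N) }.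

Definition is_ulim (Rl : realType) (U : (nat -> Prop) -> Prop) (a : nat -> Rl)
    (l : Rl) : Prop :=
  forall e : Rl, 0 < e -> U (fun n => `|a n - l| < e).

Section Mod.
Variables (K : fieldType) (R : algType K) (N : lmodType R).

Definition Kscale (k : K) (x : N) : N := k%:A *: x.

Definition in_Rspan (ys : seq N) (x : N) : Prop :=
  exists rs : seq R, size rs = size ys /\ x = \sum_(i < size ys) rs`_i *: ys`_i.

Definition generates (ys : seq N) : Prop := forall x : N, in_Rspan ys x.

Definition is_submodule (M : N -> Prop) : Prop :=
  [/\ M 0, (forall x y, M x -> M y -> M (x + y)) &
      (forall (r : R) x, M x -> M (r *: x))].

Definition generates_sub (M : N -> Prop) (ys : seq N) : Prop :=
  (forall y, y \in ys -> M y) /\ (forall x, M x <-> in_Rspan ys x).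

(* spanning family of  \sum_i W y_i  (as a K-space) *)
Definition Wmul (Wn : seq R) (ys : seq N) : seq N :=
  [seq w *: y | w <- Wn, y <- ys].

(* the sequence  dim_K(\sum_i W_n y_i) / dim_K(W_n)  whose ultralimit is rank *)
Definition rank_seq (Rl : realType) (W : nat -> seq R) (ys : seq N) : nat -> Rl :=
  fun n => ratio Rl (dim_span Kscale (Wmul (W n) ys)) (dim_span *:%R (W n)).
End Mod.

(* R-linear surjection with kernel M: identifies Q with N/M *)
Definition is_quotient_map (K : fieldType) (R : algType K) (N Q : lmodType R)
    (M : N -> Prop) (pi : N -> Q) : Prop :=
  [/\ (forall x y, pi (x + y) = pi x + pi y),
      (forall (r : R) x, pi (r *: x) = r *: pi x),
      (forall q : Q, exists x, pi x = q) &
      (forall x, pi x = 0 <-> M x)].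

(* The lifts ps of the generators of N/M and the generators zs of M are
   R-combinations of the generators ys of N with coefficients in a finite set rs.
   Hence W ps and W zs lie in the K-span of (W + sum_(r in rs) W r) ys, and a basis
   of pi(W ps) = W qs, lifted, together with a basis of W zs (which pi kills) is
   free there.  Completing a basis of W to one of W + sum_r W r gives
     dim W qs + dim W zs <= dim W ys + |ys| * sum_(r in rs) (dim (W r + W) - dim W).
   Dividing by dim W_n, the Folner condition makes the error term vanish, and the
   inequality survives the ultralimit. *)

From Pilot Require Import Defs.
From HB Require Import structures.
From mathcomp Require Import all_boot all_order all_algebra.
From mathcomp Require Import boolp reals.
From mathcomp Require Import lra.
(* [vector] also exports a [dim_span]; bring the one of [Defs] back in scope. *)
Import Defs.
Set Implicit Arguments. Unset Strict Implicit. Unset Printing Implicit Defensive.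
Import Order.TTheory GRing.Theory Num.Theory.
Local Open Scope ring_scope.

Section KSpan.
Variables (K : fieldType) (V : lmodType K).
Implicit Types (s t u a b : seq V) (x y : V) (c : seq K) (k : K).

Definition lincomb c s : V := \sum_(i < size s) c`_i *: s`_i.

Lemma lincomb_eq c c' s :
  (forall i, (i < size s)%N -> c`_i = c'`_i) -> lincomb c s = lincomb c' s.
Proof. by move=> eq_c; apply: eq_bigr => i _; rewrite eq_c. Qed.

Lemma lincomb_cat c s t :
  lincomb c (s ++ t) = lincomb c s + lincomb (drop (size s) c) t.
Proof.
rewrite /lincomb size_cat big_split_ord /=; congr (_ + _); apply: eq_bigr => i _.
  by rewrite nth_cat ltn_ord.
by rewrite nth_cat ltnNge leq_addr /= addKn nth_drop.
Qed.

Lemma lincomb_seq1 c x : lincomb c [:: x] = c`_0 *: x.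
Proof. by rewrite /lincomb big_ord1. Qed.

Lemma in_KspanP s x : in_Kspan *:%R s x <-> exists c, x = lincomb c s.
Proof.
split=> [[c [_ ->]]|[c ->]]; first by exists c.
exists (mkseq (nth 0 c) (size s)); rewrite size_mkseq; split=> //.
by apply: lincomb_eq => i lt_i; rewrite nth_mkseq.
Qed.

Lemma KfreeP s :
  Kfree *:%R s <-> forall c, lincomb c s = 0 -> forall i, (i < size s)%N -> c`_i = 0.
Proof.
split=> [free_s c c0 i lt_i | free_s c sz_c c0 i].
  have := free_s (mkseq (nth 0 c) (size s)) (size_mkseq _ _).
  rewrite -[X in X = 0 -> _]/(lincomb _ s) -c0 (lincomb_eq (c' := c)).
    by move=> /(_ erefl i); rewrite nth_mkseq.
  by move=> j lt_j; rewrite nth_mkseq.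
have [lt_i|ge_i] := ltnP i (size s); first exact: free_s.
by rewrite nth_default ?sz_c.
Qed.

Lemma in_Kspan_sum s I (r : seq I) (P : pred I) (F : I -> V) :
  (forall i, P i -> in_Kspan *:%R s (F i)) ->
  in_Kspan *:%R s (\sum_(i <- r | P i) F i).
Proof.
move=> sF; apply: (big_ind (in_Kspan *:%R s)) => //.
  apply/in_KspanP; exists [::]; apply/esym/big1 => i _.
  by rewrite nth_nil scale0r.
move=> x y /in_KspanP[c ->] /in_KspanP[c' ->]; apply/in_KspanP.
exists (mkseq (fun i => c`_i + c'`_i) (size s)); rewrite /lincomb -big_split.
by apply: eq_bigr => i _; rewrite nth_mkseq // scalerDl.
Qed.

Lemma in_KspanZ s k x : in_Kspan *:%R s x -> in_Kspan *:%R s (k *: x).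
Proof.
move=> /in_KspanP[c ->]; apply/in_KspanP.
exists (mkseq (fun i => k * c`_i) (size s)); rewrite /lincomb scaler_sumr.
by apply: eq_bigr => i _; rewrite nth_mkseq // scalerA.
Qed.

Lemma in_Kspan_mem s x : x \in s -> in_Kspan *:%R s x.
Proof.
move=> s_x; apply/in_KspanP; exists (mkseq (fun i => (i == index x s)%:R) (size s)).
have lt_x : (index x s < size s)%N by rewrite index_mem.
rewrite /lincomb (bigD1 (Ordinal lt_x)) //= nth_mkseq // eqxx scale1r nth_index //.
rewrite big1 ?addr0 // => i; rewrite -val_eqE nth_mkseq //= => /negbTE ->.
exact: scale0r.
Qed.

Lemma in_Kspan_trans s t x :
  {in s, forall y, in_Kspan *:%R t y} -> in_Kspan *:%R s x -> in_Kspan *:%R t x.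
Proof.
move=> st /in_KspanP[c ->]; apply: in_Kspan_sum => i _.
by apply/in_KspanZ/st/mem_nth.
Qed.

Lemma in_Kspan_sub s t x : {subset s <= t} -> in_Kspan *:%R s x -> in_Kspan *:%R t x.
Proof. by move=> st; apply: in_Kspan_trans => y /st /in_Kspan_mem. Qed.

Lemma Kfree_rcons a x :
  Kfree *:%R a -> ~ in_Kspan *:%R a x -> Kfree *:%R (rcons a x).
Proof.
move=> /KfreeP free_a a'x; apply/KfreeP => c.
rewrite -cats1 lincomb_cat lincomb_seq1 nth_drop addn0 size_cat addn1.
set k := c`_(size a) => c0.
have k0 : k = 0.
  apply: contra_notP a'x => /eqP nz_k.
  have -> : x = (- k^-1) *: lincomb c a.
    move/eqP: c0; rewrite addr_eq0 => /eqP ->.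
    by rewrite scalerN scaleNr opprK scalerA mulVf ?scale1r.
  by apply/in_KspanZ/in_KspanP; exists c.
move: c0; rewrite k0 scale0r addr0 => /free_a c0 i.
by rewrite ltnS leq_eqVlt => /predU1P[-> | /c0].
Qed.

(* Steinitz: were u longer than s, its coefficient matrix over s would have a
   nonzero left kernel vector, i.e. a nontrivial vanishing combination of u. *)
Lemma Kfree_size_le u s :
  Kfree *:%R u -> {in u, forall y, in_Kspan *:%R s y} -> (size u <= size s)%N.
Proof.
move=> /KfreeP free_u us; rewrite leqNgt; apply/negP => lt_su.
have /fin_all_exists[f uf] : forall j : 'I_(size u), exists c, u`_j = lincomb c s.
  by move=> j; apply/in_KspanP/us/mem_nth.
pose A : 'M[K]_(size u, size s) := \matrix_(j, i) (f j)`_i.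
pose v := nz_row (kermx A).
have nz_v : v != 0.
  by rewrite nz_row_eq0 kermx_eq0 /row_free neq_ltn (leq_ltn_trans (rank_leq_col A)).
have vA : v *m A = 0 by apply/sub_kermxP/nz_row_sub.
pose c := [seq v 0 j | j <- enum 'I_(size u)].
have cE (j : 'I_(size u)) : c`_j = v 0 j.
  by rewrite (nth_map j) ?size_enum_ord // nth_ord_enum.
have c0 : lincomb c u = 0.
  transitivity (\sum_(i < size s) (v *m A) 0 i *: s`_i).
    rewrite /lincomb; under eq_bigr => j _ do rewrite uf /lincomb scaler_sumr.
    rewrite exchange_big; apply: eq_bigr => i _; rewrite mxE scaler_suml.
    by apply: eq_bigr => j _; rewrite cE !mxE scalerA.
  by rewrite vA big1 // => i _; rewrite mxE scale0r.
move/negP: nz_v; apply; apply/eqP/rowP => j.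
by have := free_u c c0 j (ltn_ord j); rewrite cE mxE.
Qed.

Lemma Kfree_extend a B : Kfree *:%R a -> exists m : seq bool, [/\ size m = size B,
  Kfree *:%R (a ++ mask m B) & {in B, forall x, in_Kspan *:%R (a ++ mask m B) x}].
Proof.
elim: B a => [|x B IH] a free_a; first by exists [::]; rewrite cats0.
have [a_x | a'x] := pselect (in_Kspan *:%R a x).
  have [m [sz_m free_m Bm]] := IH a free_a.
  exists (false :: m); split; rewrite /= ?sz_m // => y /predU1P[-> | /Bm //].
  by apply: in_Kspan_sub a_x => z z_a; rewrite mem_cat z_a.
have [m [sz_m free_m Bm]] := IH _ (Kfree_rcons free_a a'x).
exists (true :: m); rewrite /= -cat_rcons; split; rewrite ?sz_m // => y.
case/predU1P=> [-> | /Bm //].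
by apply: in_Kspan_mem; rewrite mem_cat mem_rcons mem_head.
Qed.

Lemma dim_span_le_size t g :
  {in t, forall x, in_Kspan *:%R g x} -> (dim_span *:%R t <= size g)%N.
Proof.
move=> tg; apply/bigmax_leqP => m /asboolP free_m.
by apply: Kfree_size_le free_m _ => y /mem_mask /tg.
Qed.

Lemma dim_span_basis s : exists m : seq bool, [/\ Kfree *:%R (mask m s),
  {in s, forall x, in_Kspan *:%R (mask m s) x} & size (mask m s) = dim_span *:%R s].
Proof.
have free0 : Kfree *:%R ([::] : seq V) by apply/KfreeP.
have [m [sz_m free_m s_m]] := Kfree_extend s free0; rewrite cat0s in free_m s_m.
exists m; split=> //; apply/eqP; rewrite eqn_leq dim_span_le_size // andbT.
have sz_m' : size m == size s by rewrite sz_m.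
exact: (leq_bigmax_cond (Tuple sz_m') (asboolT free_m)).
Qed.

Lemma Kfree_size_le_dim_span u t : Kfree *:%R u ->
  {in u, forall x, in_Kspan *:%R t x} -> (size u <= dim_span *:%R t)%N.
Proof.
move=> free_u ut; have [m [_ t_m <-]] := dim_span_basis t.
by apply: Kfree_size_le free_u _ => y /ut; apply: in_Kspan_trans.
Qed.

Lemma dim_span_mono t g : {in t, forall x, in_Kspan *:%R g x} ->
  (dim_span *:%R t <= dim_span *:%R g)%N.
Proof.
move=> tg; have [m [free_m _ <-]] := dim_span_basis t.
by apply: Kfree_size_le_dim_span free_m _ => x /mem_mask /tg.
Qed.

Lemma dim_span_cat_le s t : (dim_span *:%R (s ++ t) <= dim_span *:%R s + size t)%N.
Proof.
have [m [_ s_m <-]] := dim_span_basis s; rewrite -size_cat.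
apply: dim_span_le_size => x; rewrite mem_cat => /orP[/s_m | t_x].
  by apply: in_Kspan_sub => y y_m; rewrite mem_cat y_m.
by apply: in_Kspan_mem; rewrite mem_cat t_x orbT.
Qed.

Lemma exists_completion A (Bs : seq (seq V)) : exists c : seq V,
  (size c <= \sum_(B <- Bs) (dim_span *:%R (B ++ A) - dim_span *:%R A))%N /\
  {in flatten Bs, forall x, in_Kspan *:%R (A ++ c) x}.
Proof.
have [ma [free_a _ sz_a]] := dim_span_basis A; set a := mask ma A in free_a sz_a.
have a_A : {subset a <= A} by move=> x /mem_mask.
elim: Bs => [|B Bs [c [sz_c Bs_c]]]; first by exists [::].
have [mb [_ free_ab B_ab]] := Kfree_extend B free_a; set b := mask mb B in free_ab B_ab.
have sz_b : (size b <= dim_span *:%R (B ++ A) - dim_span *:%R A)%N.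
  rewrite -sz_a -(addKn (size a) (size b)) leq_sub2r // -size_cat.
  apply: Kfree_size_le_dim_span free_ab _ => x x_ab; apply: in_Kspan_mem.
  move: x_ab; rewrite !mem_cat => /orP[/a_A -> | /mem_mask ->]; by rewrite ?orbT.
exists (b ++ c); split; first by rewrite big_cons size_cat leq_add.
move=> x; rewrite /= mem_cat => /orP[/B_ab | /Bs_c]; apply: in_Kspan_sub => z.
  by rewrite !mem_cat => /orP[/a_A -> | ->]; rewrite ?orbT.
by rewrite !mem_cat => /orP[-> | ->]; rewrite ?orbT.
Qed.
End KSpan.

Section KernelBound.
Variables (K : fieldType) (V V' : lmodType K) (f : {linear V -> V'}).
Implicit Types (s t a b : seq V) (c : seq K).

Lemma lincomb_map c s : f (lincomb c s) = lincomb c (map f s).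
Proof.
rewrite /lincomb size_map linear_sum; apply: eq_bigr => i _.
by rewrite linearZ (nth_map 0).
Qed.

Lemma Kfree_cat_ker a b : Kfree *:%R (map f a) -> Kfree *:%R b ->
  {in b, forall x, f x = 0} -> Kfree *:%R (a ++ b).
Proof.
move=> /KfreeP; rewrite size_map => free_fa /KfreeP free_b fb0.
apply/KfreeP => c.
rewrite lincomb_cat size_cat => c0 i.
have fb : f (lincomb (drop (size a) c) b) = 0.
  by rewrite linear_sum big1 // => j _; rewrite linearZZ fb0 ?scaler0 ?mem_nth.
have ca0 : forall j, (j < size a)%N -> c`_j = 0.
  by apply: free_fa; rewrite -lincomb_map -(linear0 f) -c0 linearD fb addr0.
have cb0 : lincomb (drop (size a) c) b = 0.
  by rewrite -c0 [lincomb c a]big1 ?add0r // => j _; rewrite ca0 // scale0r.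
have [lt_i _ | ge_i] := ltnP i (size a); first exact: ca0.
rewrite -(subnKC ge_i) ltn_add2l => lt_i'.
by have := free_b _ cb0 _ lt_i'; rewrite nth_drop.
Qed.

Lemma dim_span_map_add_ker_le a b t : {in a ++ b, forall x, in_Kspan *:%R t x} ->
  {in b, forall x, f x = 0} ->
  (dim_span *:%R (map f a) + dim_span *:%R b <= dim_span *:%R t)%N.
Proof.
move=> abt fb0; have [ma [free_a _ <-]] := dim_span_basis (map f a).
have [mb [free_b _ <-]] := dim_span_basis b.
rewrite -map_mask in free_a *; rewrite size_map -size_cat.
apply: Kfree_size_le_dim_span.
  by apply: Kfree_cat_ker free_a free_b _ => x /mem_mask /fb0.
move=> x; rewrite mem_cat => /orP[] /mem_mask x_ab; apply: abt.
  by rewrite mem_cat x_ab.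
by rewrite mem_cat x_ab orbT.
Qed.
End KernelBound.

Section RestrictionOfScalars.
Variables (K : fieldType) (R : algType K) (N : lmodType R).

(* Restriction of scalars: with this instance the [Kscale] of [Defs] is the
   canonical scaling, so the lemmas of [KSpan] apply to [Kmod N]. *)
Definition Kmod : Type := N.

Fact KscaleA a b (x : N) : Kscale a (Kscale b x) = Kscale (a * b) x.
Proof. by rewrite /Kscale scalerA -scalerAl mul1r -scalerA. Qed.

Fact Kscale1 : left_id 1 (@Kscale K R N).
Proof. by move=> x; rewrite /Kscale !scale1r. Qed.

Fact KscaleDr : right_distributive (@Kscale K R N) +%R.
Proof. by move=> a x y; rewrite /Kscale scalerDr. Qed.

Fact KscaleDl (x : N) : {morph (@Kscale K R N)^~ x : a b / a + b}.
Proof. by move=> a b; rewrite /Kscale !scalerDl. Qed.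

HB.instance Definition _ := GRing.Zmodule.on Kmod.
HB.instance Definition _ :=
  GRing.Zmodule_isLmodule.Build K Kmod KscaleA Kscale1 KscaleDr KscaleDl.
End RestrictionOfScalars.

Section WmulBounds.
Variables (K : fieldType) (R : algType K) (N : lmodType R) (ys : seq N).
Implicit Types (g A Wn rs : seq R).
Local Notation dimN := (dim_span (@Kscale K R N)).
Local Notation dimR := (dim_span ( *:%R : K -> R -> R)).

Definition in_Rspan_over rs (x : N) : Prop := exists c : seq R,
  [/\ size c = size ys, {subset c <= rs} & x = \sum_(i < size ys) c`_i *: ys`_i].

Lemma in_Kspan_Wmul g e y : in_Kspan *:%R g e -> y \in ys ->
  in_Kspan (@Kscale K R N) (Wmul g ys) (e *: y).
Proof.
move=> /in_KspanP[c ->] ys_y; rewrite scaler_suml.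
apply: (@in_Kspan_sum K (Kmod N)) => i _.
have -> : (c`_i *: g`_i) *: y = Kscale c`_i (g`_i *: y) by rewrite /Kscale scalerA mulr_algl.
apply/(@in_KspanZ K (Kmod N))/(@in_Kspan_mem K (Kmod N)).
by apply: allpairs_f ys_y; apply: mem_nth.
Qed.

Lemma dim_span_Wmul_mono g g' : {in g, forall w, in_Kspan *:%R g' w} ->
  (dimN (Wmul g ys) <= dimN (Wmul g' ys))%N.
Proof.
move=> gg'; apply: (@dim_span_mono K (Kmod N)) => _ /allpairsP[[w y] [/= g_w ys_y ->]].
exact: in_Kspan_Wmul (gg' w g_w) ys_y.
Qed.

Lemma dim_span_Wmul_cat_le g g' :
  (dimN (Wmul (g ++ g') ys) <= dimN (Wmul g ys) + size g' * size ys)%N.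
Proof.
rewrite /Wmul allpairs_cat; apply: leq_trans (@dim_span_cat_le K (Kmod N) _ _) _.
by rewrite size_allpairs.
Qed.

Lemma dim_span_Wmul_flatten_le A (Bs : seq (seq R)) :
  (dimN (Wmul (A ++ flatten Bs) ys) <= dimN (Wmul A ys) +
     size ys * \sum_(B <- Bs) (dimR (B ++ A) - dimR A))%N.
Proof.
have [c [sz_c Bs_c]] := exists_completion A Bs.
apply: leq_trans (dim_span_Wmul_mono (g' := A ++ c) _) _.
  move=> w; rewrite mem_cat => /orP[A_w | /Bs_c //].
  by apply: in_Kspan_mem; rewrite mem_cat A_w.
apply: leq_trans (dim_span_Wmul_cat_le _ _) _.
by rewrite leq_add2l mulnC leq_mul2l sz_c orbT.
Qed.

Lemma in_Kspan_Wmul_over Wn rs w x : w \in Wn -> in_Rspan_over rs x ->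
  in_Kspan (@Kscale K R N)
    (Wmul (Wn ++ flatten [seq [seq w' * r | w' <- Wn] | r <- rs]) ys) (w *: x).
Proof.
move=> Wn_w [c [sz_c c_rs ->]]; rewrite scaler_sumr.
apply: (@in_Kspan_sum K (Kmod N)) => i _; rewrite scalerA.
apply: (@in_Kspan_mem K (Kmod N)); apply: allpairs_f; last exact: mem_nth.
rewrite mem_cat; apply/orP; right; apply/flattenP.
exists [seq w' * c`_i | w' <- Wn]; last exact: map_f.
by apply/map_f/c_rs/mem_nth; rewrite sz_c.
Qed.
End WmulBounds.

Section QuotientBound.
Variables (K : fieldType) (R : algType K) (N Q : lmodType R) (pi : N -> Q).
Hypotheses (piD : {morph pi : x y / x + y})
  (piZ : forall (r : R) x, pi (r *: x) = r *: pi x).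

Definition Kpi : Kmod N -> Kmod Q := pi.

Fact Kpi_linear : linear Kpi.
Proof. by move=> a x y; rewrite /Kpi piD piZ. Qed.

HB.instance Definition _ := GRing.isLinear.Build K (Kmod N) (Kmod Q) *:%R Kpi Kpi_linear.

Lemma dim_span_Wmul_quotient_le Wn rs ys (ps zs : seq N) :
  {in ps ++ zs, forall x, in_Rspan_over ys rs x} -> {in zs, forall z, pi z = 0} ->
  (dim_span (@Kscale K R Q) (Wmul Wn (map pi ps)) + dim_span (@Kscale K R N) (Wmul Wn zs)
   <= dim_span (@Kscale K R N) (Wmul Wn ys) + size ys *
        \sum_(r <- rs) (dim_span *:%R ([seq (w * r)%R | w <- Wn] ++ Wn) - dim_span *:%R Wn))%N.
Proof.
move=> ps_zs zs0.
have -> : Wmul Wn (map pi ps) = map Kpi (Wmul Wn ps).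
  by rewrite /Wmul map_allpairs allpairs_mapr; apply: eq_allpairs => w p; rewrite /Kpi piZ.
set Bs := [seq [seq w * r | w <- Wn] | r <- rs].
rewrite -(big_map (fun r => [seq w * r | w <- Wn]) xpredT
  (fun B => dim_span *:%R (B ++ Wn) - dim_span *:%R Wn)%N).
apply: leq_trans (dim_span_Wmul_flatten_le ys Wn Bs).
apply: (@dim_span_map_add_ker_le K (Kmod N) (Kmod Q) Kpi).
  move=> x; rewrite mem_cat => /orP[] /allpairsP[[w p] [/= Wn_w p_in ->]];
    apply: in_Kspan_Wmul_over Wn_w (ps_zs _ _); by rewrite mem_cat p_in ?orbT.
by move=> _ /allpairsP[[w z] [/= _ zs_z ->]]; rewrite /Kpi piZ zs0 ?scaler0.
Qed.
End QuotientBound.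

Lemma ratio_add_le (Rl : realType) (A B C s b : nat) (ds : seq nat) (e : Rl) :
  (0 < b)%N -> (A + B <= C + s * \sum_(d <- ds) (d - b))%N ->
  {in ds, forall d, (b <= d)%N /\ ratio Rl d b - 1 <= e} ->
  ratio Rl A b + ratio Rl B b <= ratio Rl C b + (s * size ds)%:R * e.
Proof.
move=> b_gt0 le_ABC ds_b; have b_gt0R : (0 : Rl) < b%:R by rewrite ltr0n.
have sum_le : (\sum_(d <- ds) (d - b)%:R : Rl) <= (size ds)%:R * e * b%:R.
  rewrite -mulrA mulr_natl -iter_addr_0 -count_predT -big_const_seq !big_seq.
  apply: ler_sum => d /ds_b[le_bd le_de].
  by rewrite natrB // -ler_pdivrMr // mulrBl divff ?gt_eqF.
rewrite /ratio -mulrDl -natrD ler_pdivrMr // mulrDl divfK ?gt_eqF //.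
apply: le_trans (_ : (C + s * \sum_(d <- ds) (d - b))%:R <= _); first by rewrite ler_nat.
by rewrite natrD natrM natr_sum lerD2l natrM -!mulrA ler_wpM2l // mulrA.
Qed.

Section FolnerEventually.
Variables (K : fieldType) (R : algType K) (Rl : realType) (W : nat -> seq R).
Hypothesis HW : folner_exhaustion Rl W.
Local Notation dimW n := (dim_span *:%R (W n)).
Local Notation dimWr n r := (dim_span *:%R ([seq w * r | w <- W n] ++ W n)).

Lemma folner_dim_gt0 : exists n0, forall n, (n0 <= n)%N -> (0 < dimW n)%N.
Proof.
case: HW => _ _ /(_ 1 1 ltr01)[n0 near1]; exists n0 => n /near1.
by rewrite lt0n; apply: contraTneq => ->; rewrite /ratio invr0 mulr0 sub0r normrN normr1 ltxx.
Qed.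

Lemma folner_ratio_lt (rs : seq R) (e : Rl) : 0 < e ->
  exists n0, forall n, (n0 <= n)%N -> {in rs, forall r, ratio Rl (dimWr n r) (dimW n) - 1 < e}.
Proof.
case: HW => _ _ folner e_gt0; elim: rs => [|r rs [n1 near_rs]]; first by exists 0%N.
have [n2 near_r] := folner r e e_gt0; exists (maxn n1 n2) => n; rewrite geq_max.
case/andP=> /near_rs n1n /near_r n2n r'; rewrite inE => /predU1P[-> | /n1n //].
exact: le_lt_trans (ler_norm _) n2n.
Qed.

Lemma rank_seq_add_le_eventually (N1 N2 N3 : lmodType R)
    (xs1 : seq N1) (xs2 : seq N2) (xs3 : seq N3) (s : nat) (rs : seq R) :
  (forall n, dim_span (@Kscale K R N1) (Wmul (W n) xs1) +
     dim_span (@Kscale K R N2) (Wmul (W n) xs2) <=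
     dim_span (@Kscale K R N3) (Wmul (W n) xs3) +
     s * \sum_(r <- rs) (dimWr n r - dimW n))%N ->
  forall e, 0 < e -> exists n0, forall n, (n0 <= n)%N ->
    rank_seq Rl W xs1 n + rank_seq Rl W xs2 n <= rank_seq Rl W xs3 n + e.
Proof.
move=> defect e e_gt0; pose c : Rl := (s * size rs).+1%:R.
have e'_gt0 : 0 < e / c by rewrite divr_gt0 ?ltr0Sn.
have [n1 dim_gt0] := folner_dim_gt0; have [n2 near1] := folner_ratio_lt rs e'_gt0.
exists (maxn n1 n2) => n; rewrite geq_max => /andP[/dim_gt0 b_gt0 /near1 rs_e].
have ds_ok : {in [seq dimWr n r | r <- rs],
    forall d, (dimW n <= d)%N /\ ratio Rl d (dimW n) - 1 <= e / c}.
  move=> _ /mapP[r r_rs ->]; split; last exact/ltW/rs_e.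
  by apply: dim_span_mono => w W_w; apply: in_Kspan_mem; rewrite mem_cat W_w orbT.
have := defect n; rewrite -(big_map (fun r => dimWr n r) xpredT (fun d => d - dimW n)%N).
move=> /(ratio_add_le b_gt0)/(_ ds_ok); rewrite size_map => /le_trans; apply.
rewrite lerD2l mulrCA ger_pMr // ler_pdivrMr ?ltr0Sn // mul1r ler_nat.
exact: leqnSn.
Qed.
End FolnerEventually.

Lemma ultrafilter_nat_witness U (P : nat -> Prop) :
  ultrafilter_nat U -> U P -> exists n, P n.
Proof.
move=> UF UP; have [// | noP] := pselect (exists n, P n).
by case: (uf_proper UF); apply: (uf_up UF) UP => n Pn; apply: noP; exists n.
Qed.

Lemma ulim_add_le (Rl : realType) U (a b c : nat -> Rl) la lb lc :
  ultrafilter_nat U -> is_ulim U a la -> is_ulim U b lb -> is_ulim U c lc ->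
  (forall e, 0 < e -> exists n0, forall n, (n0 <= n)%N -> a n + b n <= c n + e) ->
  la + lb <= lc.
Proof.
move=> UF a_la b_lb c_lc abc; apply/ler_addgt0Pr => e e_gt0.
have e4_gt0 : 0 < e / 4 by rewrite divr_gt0.
have [n0 abc_n] := abc _ e4_gt0.
have [n [[a_n b_n] [c_n /abc_n abc_n']]] := ultrafilter_nat_witness UF
  (uf_cap UF (uf_cap UF (a_la _ e4_gt0) (b_lb _ e4_gt0))
             (uf_cap UF (c_lc _ e4_gt0) (uf_free UF n0))).
move: a_n b_n c_n; rewrite !ltr_norml => /andP[? ?] /andP[? ?] /andP[? ?].
lra.
Qed.

Theorem corollary2 (K : fieldType) (R : algType K) (Rl : realType)
    (W : nat -> seq R) (U : (nat -> Prop) -> Prop)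
    (Haff : affine R) (HW : folner_exhaustion Rl W) (HU : ultrafilter_nat U)
    (N Q : lmodType R) (M : N -> Prop) (pi : N -> Q)
    (HM : is_submodule M) (Hpi : is_quotient_map M pi)
    (ys : seq N) (qs : seq Q) (zs : seq N)
    (Hys : generates ys) (Hqs : generates qs) (Hzs : generates_sub M zs)
    (rN rQ rM : Rl)
    (HrN : is_ulim U (rank_seq Rl W ys) rN)
    (HrQ : is_ulim U (rank_seq Rl W qs) rQ)
    (HrM : is_ulim U (rank_seq Rl W zs) rM) :
  rQ + rM <= rN.
Proof.
case: Hpi => piD piZ /choice[pre preK] piM.
have [coef coefP] := choice Hys.
pose ps := map pre qs.
have qsE : qs = map pi ps by rewrite -map_comp (eq_map preK) map_id.
pose rs := flatten [seq coef x | x <- ps ++ zs].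
have ps_zs : {in ps ++ zs, forall x, in_Rspan_over ys rs x}.
  move=> x x_in; have [sz_c xE] := coefP x; exists (coef x); split=> // r r_c.
  by apply/flattenP; exists (coef x); rewrite ?map_f.
have zs0 : {in zs, forall z, pi z = 0} by move=> z /Hzs.1 /piM.
rewrite qsE in HrQ; apply: (ulim_add_le HU HrQ HrM HrN).
apply: (rank_seq_add_le_eventually HW (s := size ys) (rs := rs)) => n.
exact: dim_span_Wmul_quotient_le.
Qed.
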